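(* Let $\eta:G\to\mathrm{U}(1)(\mathbb{F}_{p^2}/\mathbb{F}_p)$ be the composite of $\det:G\to\mathrm{U}(1)(\mathbb{Q}_{p^2}/\mathbb{Q}_p)$ with reduction modulo $p$. Then $\eta$ is surjective and $\ker(\eta)=G_0$.
   Context: $p$ odd prime; $\mathbb{Q}_{p^2}$ the unramified quadratic extension of $\mathbb{Q}_p$, integers $\mathbb{Z}_{p^2}$, automorphism $x\mapsto\bar x$. $G=\mathrm{U}(1,1)(\mathbb{Q}_{p^2}/\mathbb{Q}_p)=\{g\in\mathrm{GL}_2(\mathbb{Q}_{p^2}):g^*sg=s\}$, $s=\begin{pmatrix}0&1\\1&0\end{pmatrix}$; $G_S=G\cap\mathrm{SL}_2(\mathbb{Q}_{p^2})$. $\mathrm{U}(1)(\mathbb{Q}_{p^2}/\mathbb{Q}_p)=\{x:x\bar x=1\}$, $\mathrm{U}(1)(\mathbb{F}_{p^2}/\mathbb{F}_p)=\{a\in\mathbb{F}_{p^2}^\times:a^{p+1}=1\}$, $\mathrm{U}(1)_1=\mathrm{U}(1)(\mathbb{Q}_{p^2}/\mathbb{Q}_p)\cap(1+p\mathbb{Z}_{p^2})$. $G_0$ is the subgroup of $G$ generated by $G_S$ and the scalar matrices $a\cdot\mathrm{id}$ with $a\in\mathrm{U}(1)_1$. *)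

From HB Require Import structures.
From mathcomp Require Import all_boot all_order all_algebra all_field.
Set Implicit Arguments. Unset Strict Implicit. Unset Printing Implicit Defensive.
Import Order.TTheory GRing.Theory Num.Theory.
Local Open Scope ring_scope.

(* Abstract description of Q_{p^2} with its Galois conjugation, its    *)
(* p-adic valuation and reduction modulo p onto F_{p^2}.               *)
(* A complete discretely valued field K with v(p) = 1 (hence char 0,   *)
(* p unramified) and residue field of cardinality p^2 is isomorphic to *)
(* Q_{p^2}; a nontrivial field automorphism of it is the Galois        *)
(* conjugation.                                          *)

Definition integral (K : fieldType) (v : K -> int) (x : K) : Prop :=
  x = 0 \/ 0 <= v x.

(* x is "N-small": x = 0 or v x >= N, i.e. x \in p^N Z_{p^2} *)
Definition small (K : fieldType) (v : K -> int) (N : int) (x : K) : Prop :=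
  x = 0 \/ N <= v x.

Record unram_quad_setup (p : nat) (K : fieldType) (conj : {rmorphism K -> K})
    (v : K -> int) (F : finFieldType) (red : K -> F) : Prop := {
  conj_invol : forall x, conj (conj x) = x;
  conj_nontriv : exists x, conj x != x;
  v_mul : forall x y, x != 0 -> y != 0 -> v (x * y) = v x + v y;
  v_add : forall x y, x != 0 -> y != 0 -> x + y != 0 ->
            Num.min (v x) (v y) <= v (x + y);
  p_neq0 : (p%:R : K) != 0;
  v_p : v p%:R = 1;
  v_conj : forall x, x != 0 -> v (conj x) = v x;
  v_complete : forall u : nat -> K,
    (forall N : int, exists M, forall m n, (M <= m)%N -> (M <= n)%N ->
        small v N (u m - u n)) ->
    exists l, forall N : int, exists M, forall n, (M <= n)%N -> small v N (u n - l);
  red_add : forall x y, integral v x -> integral v y -> red (x + y) = red x + red y;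
  red_mul : forall x y, integral v x -> integral v y -> red (x * y) = red x * red y;
  red_1 : red 1 = 1;
  red_ker : forall x, integral v x -> (red x = 0 <-> small v 1 x);
  red_surj : forall a : F, exists x, integral v x /\ red x = a
}.

Definition smx (K : fieldType) : 'M[K]_2 := \matrix_(i, j) (i != j)%:R.

Definition adjc (K : fieldType) (conj : {rmorphism K -> K}) (g : 'M[K]_2) :=
  (map_mx conj g)^T.

(* G = U(1,1)(Q_{p^2}/Q_p) *)
Definition inG (K : fieldType) (conj : {rmorphism K -> K}) (g : 'M[K]_2) : Prop :=
  adjc conj g *m smx K *m g = smx K.

Definition inGS (K : fieldType) (conj : {rmorphism K -> K}) (g : 'M[K]_2) : Prop :=
  inG conj g /\ \det g = 1.

Definition inU1_1 (K : fieldType) (conj : {rmorphism K -> K}) (v : K -> int)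
    (a : K) : Prop :=
  a * conj a = 1 /\ small v 1 (a - 1).

Inductive gen_grp (K : fieldType) (S : 'M[K]_2 -> Prop) : 'M[K]_2 -> Prop :=
  | gen_base : forall g, S g -> gen_grp S g
  | gen_one : gen_grp S 1%:M
  | gen_mul : forall g h, gen_grp S g -> gen_grp S h -> gen_grp S (g *m h)
  | gen_inv : forall g, gen_grp S g -> gen_grp S (invmx g).

(* G_0 = <G_S, a.id (a in U(1)_1)> *)
Definition inG0 (K : fieldType) (conj : {rmorphism K -> K}) (v : K -> int)
    (g : 'M[K]_2) : Prop :=
  gen_grp (fun h => inGS conj h \/ exists a, inU1_1 conj v a /\ h = a%:M) g.

From HB Require Import structures.
From mathcomp Require Import all_boot all_order all_algebra all_field.
From mathcomp Require Import zify ring.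
Import Order.TTheory GRing.Theory Num.Theory.
Set Implicit Arguments. Unset Strict Implicit. Unset Printing Implicit Defensive.
Local Open Scope ring_scope.

(* For [g] in [G], [det g * conj (det g) = 1], so [det g] is a unit and, since
   conjugation fixes [Q_p] and is nontrivial, it reduces to the Frobenius of
   [F_{p^2}]; hence [eta g] has norm [eta g ^+ p.+1 = 1].  Surjectivity is
   Hilbert 90: [a = b / b^p], realised by [diag(w, conj(w)^-1)] for a lift [w]
   of [b].  For the kernel, a determinant [d = 1 mod p] has a square root
   [a = 1 mod p] by Newton's iteration ([p] is odd); [a * conj a] squares to [1]
   and is [1 mod p], so it is [1], and [g = a * (a^-1 g)] with [a^-1 g] in
   [G_S].  Conversely the generators of [G_0] have determinant in [1 + p Z_{p^2}]. *)

Lemma det_mx2 (R : comNzRingType) (A : 'M[R]_2) :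
  \det A = A 0 0 * A 1 1 - A 0 1 * A 1 0.
Proof.
rewrite (expand_det_row _ 0) !big_ord_recl big_ord0 addr0 /cofactor !det_mx11 !mxE /=.
rewrite !expr0 expr1 !mul1r mulN1r mulrN.
by congr (A _ _ * A _ _ - A _ _ * A _ _); apply/val_inj.
Qed.

Lemma det_smx (K : fieldType) : \det (smx K) = -1.
Proof. by rewrite det_mx2 !mxE /= mulr0 mulr1 sub0r. Qed.

Definition diag2 (R : nzRingType) (x y : R) : 'M[R]_2 :=
  \matrix_(i, j) if i == j then (if i == 0 then x else y) else 0.

Lemma det_diag2 (R : comNzRingType) (x y : R) : \det (diag2 x y) = x * y.
Proof. by rewrite det_mx2 !mxE /= mulr0 subr0. Qed.

Section UnitaryGroup.
Variables (K : fieldType) (conj : {rmorphism K -> K}).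

Lemma inG_diag2 x y : conj x * y = 1 -> conj y * x = 1 -> inG conj (diag2 x y).
Proof.
move=> xy yx; apply/matrixP => i j; rewrite !(mxE, big_ord_recl, big_ord0).
case: i => [[|[|//]] ?]; case: j => [[|[|//]] ?] /=.
all: rewrite ?rmorph0 ?mulr0 ?mul0r ?addr0 ?add0r ?mulr1 ?mul1r //; exact: mul0r.
Qed.

Lemma inG_det_norm g : inG conj g -> \det g * conj (\det g) = 1.
Proof.
move/(congr1 determinant); rewrite !det_mulmx det_tr det_map_mx det_smx => e.
by apply: oppr_inj; rewrite -e; ring.
Qed.

Lemma inG_scale c g : c * conj c = 1 -> inG conj g -> inG conj (c *: g).
Proof.
move=> cc gG; rewrite /inG /adjc map_mxZ [(_ *: _)^T]linearZ -!scalemxAl -scalemxAr.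
by rewrite scalerA mulrC cc scale1r.
Qed.

End UnitaryGroup.

Lemma sum_prod_eq_cases (R : idomainType) (t t' r r' : R) :
  t + t' = r + r' -> t * t' = r * r' -> t = r \/ t = r'.
Proof.
move=> sum_eq prod_eq.
have : (t - r) * (t - r') = 0.
  transitivity (t * t - t * (r + r') + r * r'); first by ring.
  by rewrite -sum_eq -prod_eq; ring.
by move/eqP; rewrite mulf_eq0 !subr_eq0 => /orP[/eqP|/eqP]; [left|right].
Qed.

Lemma pchar_odd_two_neq0 (R : nzRingType) p :
  p \in [pchar R] -> odd p -> 2%:R != 0 :> R.
Proof.
move=> charRp p_odd; apply/negP; rewrite -(dvdn_pcharf charRp).
move/(dvdn_leq (isT : (0 < 2)%N)) => le_p2.
have p_gt1 := prime_gt1 (pcharf_prime charRp).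
have p2 : p = 2%N by lia.
by rewrite p2 in p_odd.
Qed.

Lemma natr_inj_pchar (R : nzRingType) p i j : p \in [pchar R] ->
  (i < p)%N -> (j < p)%N -> i%:R = j%:R :> R -> i = j.
Proof.
move=> charRp; wlog le_ij : i j / (i <= j)%N.
  move=> W ip jp ij; have [le_ij|/ltnW le_ji] := leqP i j; first exact: W.
  exact/esym/W.
move=> ip jp ij; have : (p %| j - i)%N by rewrite (dvdn_pcharf charRp) natrB // ij subrr.
by case: (posnP (j - i)) => [|ji_gt0 /(dvdn_leq ji_gt0)]; lia.
Qed.

(* [X^p - X] has at most [p] roots, and [0, ..., p-1] already give [p] of them. *)
Lemma frobenius_fixed_natr (R : idomainType) p (z : R) :
  p \in [pchar R] -> z ^+ p = z -> exists i, z = i%:R.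
Proof.
move=> charRp zp.
have [/existsP[i /eqP->]|notnat] := boolP [exists i : 'I_p, z == i%:R]; first by exists i.
have p_gt1 := prime_gt1 (pcharf_prime charRp).
pose rs := z :: [seq i%:R | i <- iota 0 p].
have size_P : size ('X^p - 'X : {poly R}) = p.+1.
  by rewrite size_polyDl size_polyXn // size_polyN size_polyX.
have P_neq0 : ('X^p - 'X : {poly R}) != 0 by rewrite -size_poly_eq0 size_P.
have rs_roots : all (root ('X^p - 'X)) rs.
  rewrite /= rootE !hornerE zp subrr eqxx /=.
  apply/allP => _ /mapP[i _ ->]; rewrite rootE !hornerE.
  by rewrite -(pFrobenius_autE charRp) pFrobenius_aut_nat subrr.
have rs_uniq : uniq rs.
  rewrite /= map_inj_in_uniq ?iota_uniq ?andbT.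
    apply/mapP => -[i]; rewrite mem_iota add0n => /andP[_ ip] zi.
    by move/existsP: notnat; apply; exists (Ordinal ip); rewrite zi.
  move=> i j; rewrite !mem_iota !add0n => /andP[_ ip] /andP[_ jp].
  exact: natr_inj_pchar charRp ip jp.
have := max_poly_roots P_neq0 rs_roots rs_uniq.
by rewrite /= size_map size_iota size_P ltnn.
Qed.

Section FrobeniusFp2.
Variables (p : nat) (F : finFieldType).
Hypotheses (p_pr : prime p) (cardF : #|F| = (p ^ 2)%N).

Lemma pchar_Fp2 : p \in [pchar F].
Proof. exact: card_finPcharP cardF p_pr. Qed.

Lemma frobeniusD (a b : F) : (a + b) ^+ p = a ^+ p + b ^+ p.
Proof. by rewrite -!(pFrobenius_autE pchar_Fp2) rmorphD. Qed.

Lemma frobeniusK (a : F) : (a ^+ p) ^+ p = a.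
Proof. by rewrite -exprM (_ : (p * p)%N = #|F|) ?expf_card // cardF. Qed.

End FrobeniusFp2.

Section UnramifiedQuadratic.
Variables (p : nat) (K : fieldType) (conj : {rmorphism K -> K}) (v : K -> int)
  (F : finFieldType) (red : K -> F).
Hypotheses (p_pr : prime p) (p_odd : odd p) (cardF : #|F| = (p ^ 2)%N)
  (S : unram_quad_setup p conj v red).

Local Notation principal x := (small v 1 (x - 1)).

Lemma v1 : v 1 = 0.
Proof.
have one_neq0 : (1 : K) != 0 by exact: oner_neq0.
by have := v_mul S one_neq0 one_neq0; rewrite mulr1; lia.
Qed.

Lemma vN x : x != 0 -> v (- x) = v x.
Proof.
have N1_neq0 : (-1 : K) != 0 by rewrite oppr_eq0 oner_neq0.
have vN1 : v (-1) = 0 by have := v_mul S N1_neq0 N1_neq0; rewrite mulrNN mulr1 v1; lia.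
by move=> x_neq0; rewrite -mulN1r (v_mul S N1_neq0 x_neq0) vN1 add0r.
Qed.

Lemma vV x : x != 0 -> v x^-1 = - v x.
Proof.
move=> x_neq0; have := v_mul S x_neq0 (invr_neq0 x_neq0).
by rewrite mulfV // v1; lia.
Qed.

Lemma vX x n : x != 0 -> v (x ^+ n) = n%:Z * v x.
Proof.
move=> x_neq0; elim: n => [|n IHn]; first by rewrite expr0 v1 mul0r.
by rewrite exprS (v_mul S x_neq0 (expf_neq0 _ x_neq0)) IHn; lia.
Qed.

Lemma smallW N M x : small v N x -> M <= N -> small v M x.
Proof. by case=> [->|vx] MN; [left|right; apply: le_trans MN vx]. Qed.

Lemma smallD N x y : small v N x -> small v N y -> small v N (x + y).
Proof.
have [-> _|x_neq0] := eqVneq x 0; first by rewrite add0r.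
have [-> sx _|y_neq0] := eqVneq y 0; first by rewrite addr0.
have [->|xy_neq0] := eqVneq (x + y) 0; first by left.
move=> [x0|vx]; first by rewrite x0 eqxx in x_neq0.
move=> [y0|vy]; first by rewrite y0 eqxx in y_neq0.
by right; apply: le_trans (v_add S x_neq0 y_neq0 xy_neq0); rewrite le_min vx vy.
Qed.

Lemma smallN N x : small v N x -> small v N (- x).
Proof.
have [-> _|x_neq0] := eqVneq x 0; first by rewrite oppr0; left.
by case=> [x0|vx]; [rewrite x0 eqxx in x_neq0|right; rewrite vN].
Qed.

Lemma smallB N x y : small v N x -> small v N y -> small v N (x - y).
Proof. by move=> sx /smallN; apply: smallD. Qed.

Lemma smallM N M x y : small v N x -> small v M y -> small v (N + M) (x * y).
Proof.
have [-> _ _|x_neq0] := eqVneq x 0; first by rewrite mul0r; left.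
have [-> _ _|y_neq0] := eqVneq y 0; first by rewrite mulr0; left.
move=> [x0|vx]; first by rewrite x0 eqxx in x_neq0.
move=> [y0|vy]; first by rewrite y0 eqxx in y_neq0.
by right; rewrite (v_mul S x_neq0 y_neq0) lerD.
Qed.

Lemma small_conj N x : small v N x -> small v N (conj x).
Proof.
have [-> _|x_neq0] := eqVneq x 0; first by rewrite rmorph0; left.
by case=> [x0|vx]; [rewrite x0 eqxx in x_neq0|right; rewrite (v_conj S x_neq0)].
Qed.

Lemma small_eq0 x : (forall N, small v N x) -> x = 0.
Proof.
move=> small_x; have [//|x_neq0] := eqVneq x 0.
by case: (small_x (v x + 1)) => // /[dup]; lia.
Qed.

Lemma smallMr N x y : small v N x -> integral v y -> small v N (x * y).
Proof. by move=> sx iy; have := smallM sx iy; rewrite addr0. Qed.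

Lemma integral1 : integral v 1.
Proof. by right; rewrite v1. Qed.

Lemma integral_nat n : integral v n%:R.
Proof.
by elim: n => [|n IHn]; [left|rewrite -addn1 natrD; apply: smallD IHn integral1].
Qed.

Lemma integralX x n : integral v x -> integral v (x ^+ n).
Proof.
move=> ix; elim: n => [|n IHn]; first by rewrite expr0; apply: integral1.
by rewrite exprS; apply: smallMr.
Qed.

Lemma red0 : red 0 = 0.
Proof. by apply/(red_ker S (or_introl (erefl 0))); left. Qed.

Lemma redN x : integral v x -> red (- x) = - red x.
Proof.
move=> ix; apply/eqP; rewrite -addr_eq0 -(red_add S) ?addNr ?red0 //.
exact: smallN.
Qed.

Lemma redB x y : integral v x -> integral v y -> red (x - y) = red x - red y.
Proof. by move=> ix iy; rewrite (red_add S) ?redN //; apply: smallN. Qed.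

Lemma redX x n : integral v x -> red (x ^+ n) = red x ^+ n.
Proof.
move=> ix; elim: n => [|n IHn]; first by rewrite !expr0 (red_1 S).
by rewrite !exprS (red_mul S) ?IHn //; apply: integralX.
Qed.

Lemma red_nat n : red n%:R = n%:R.
Proof.
elim: n => [|n IHn]; first exact: red0.
rewrite -addn1 !natrD (red_add S) ?IHn ?(red_1 S) //.
  exact: integral_nat.
exact: integral1.
Qed.

Lemma red2_neq0 : red 2%:R != 0.
Proof. by rewrite red_nat (pchar_odd_two_neq0 (pchar_Fp2 p_pr cardF) p_odd). Qed.

Lemma red_eq x y : integral v x -> integral v y ->
  red x = red y <-> small v 1 (x - y).
Proof.
move=> ix iy; rewrite -(red_ker S (smallB ix iy)) redB //.
by split=> [->|/eqP]; [rewrite subrr|rewrite subr_eq0 => /eqP].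
Qed.

Lemma red_eq1 x : integral v x -> red x = 1 <-> principal x.
Proof. by move=> ix; rewrite -(red_1 S); apply: red_eq ix integral1. Qed.

Lemma v_red_neq0 x : integral v x -> red x != 0 -> v x = 0.
Proof.
move=> ix rx_neq0; have not_small_x : ~ small v 1 x.
  by move/(red_ker S ix) => rx0; rewrite rx0 eqxx in rx_neq0.
case: ix => [x0|vx]; first by rewrite x0 red0 eqxx in rx_neq0.
have : ~ 1 <= v x by move=> vx1; apply: not_small_x; right.
by lia.
Qed.

Lemma red_inv x : integral v x -> red x != 0 ->
  integral v x^-1 /\ red x^-1 = (red x)^-1.
Proof.
move=> ix rx_neq0; have x_neq0 : x != 0 by apply: contraNneq rx_neq0 => ->; rewrite red0.
have ixV : integral v x^-1 by right; rewrite vV // (v_red_neq0 ix rx_neq0).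
split=> //; apply: (mulfI rx_neq0).
by rewrite -(red_mul S) // mulfV // mulfV // (red_1 S).
Qed.

Lemma principal_integral x : principal x -> integral v x.
Proof.
by move=> px; rewrite -(subrK 1 x); apply: smallD integral1; apply: smallW px _.
Qed.

Lemma principal_neq0 x : principal x -> x != 0.
Proof.
move=> px; apply/eqP => x0; move: px; rewrite x0 sub0r => /smallN; rewrite opprK.
by case=> [/eqP|]; [rewrite oner_eq0|rewrite v1].
Qed.

Lemma principalM x y : principal x -> principal y -> principal (x * y).
Proof.
move=> px py; have -> : x * y - 1 = (x - 1) * y + (y - 1) by ring.
by apply: smallD (smallMr px (principal_integral py)) py.
Qed.

Lemma principal_conj x : principal x -> principal (conj x).
Proof. by move/small_conj; rewrite rmorphB rmorph1. Qed.

Lemma principalV x : principal x -> principal x^-1.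
Proof.
move=> px; have ix := principal_integral px.
have rx_neq0 : red x != 0 by rewrite (proj2 (red_eq1 ix) px) oner_neq0.
have [ixV _] := red_inv ix rx_neq0.
have -> : x^-1 - 1 = - (x - 1) * x^-1.
  by rewrite mulNr mulrBl mulfV ?principal_neq0 // mul1r opprB.
by apply: smallMr ixV; apply: smallN.
Qed.

Lemma principal_sqr_eq1 x : principal x -> x ^+ 2 = 1 -> x = 1.
Proof.
move=> px /eqP; rewrite -subr_eq0 subr_sqr_1 mulf_eq0 subr_eq0 addr_eq0.
case/orP=> /eqP // xN1; move: px; rewrite xN1 -opprD => /smallN; rewrite opprK.
by move/(red_ker S (integral_nat 2))/eqP; rewrite (negPf red2_neq0).
Qed.

Lemma red_conj_fixed y : integral v y -> red y ^+ p = red y -> red (conj y) = red y.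
Proof.
move=> iy /(frobenius_fixed_natr (pchar_Fp2 p_pr cardF)) [i ry].
have /(red_eq iy (integral_nat i)) : red y = red i%:R by rewrite red_nat.
move/small_conj; rewrite rmorphB rmorph_nat => /(red_eq (small_conj iy) (integral_nat i)).
by rewrite red_nat -ry.
Qed.

(* [x + x^p] and [x^(p+1)] reduce into [F_p], so [red (conj x)] and [red x]
   have the same trace and norm down to [F_p]. *)
Lemma red_conj_cases x : integral v x ->
  red (conj x) = red x \/ red (conj x) = red x ^+ p.
Proof.
move=> ix; have icx := small_conj ix; have ixp := integralX p ix.
have frobK := frobeniusK cardF; have frobD := frobeniusD p_pr cardF.
apply: sum_prod_eq_cases.
  have := @red_conj_fixed (x + x ^+ p) (smallD ix ixp).
  rewrite rmorphD rmorphXn !(red_add S) ?redX //; last exact: integralX.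
  by apply; rewrite frobD frobK addrC.
have := @red_conj_fixed (x ^+ p.+1) (integralX p.+1 ix).
rewrite rmorphXn !redX // -!exprS; apply.
by rewrite -exprM mulnC exprM exprS frobK -exprSr.
Qed.

Lemma exists_anticonj_unit : exists d, [/\ d != 0, v d = 0 & conj d = - d].
Proof.
have [t conj_t] := conj_nontriv S; set e := t - conj t.
have e_neq0 : e != 0 by rewrite subr_eq0 eq_sym.
have conj_e : conj e = - e by rewrite rmorphB (conj_invol S) opprB.
have pX_neq0 k : (p%:R : K) ^+ k != 0 by apply: expf_neq0; apply: p_neq0 S.
have v_pX k : v (p%:R ^+ k) = k%:Z by rewrite vX ?(p_neq0 S) // (v_p S) mulr1.
have conj_pX k : conj (p%:R ^+ k) = p%:R ^+ k by rewrite rmorphXn rmorph_nat.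
case ve: (v e) => [k|k].
  exists (e / p%:R ^+ k); split; first by rewrite mulf_neq0 // invr_eq0.
    by rewrite (v_mul S) ?invr_eq0 // vV // v_pX ve subrr.
  by rewrite rmorphM fmorphV conj_pX conj_e mulNr.
exists (e * p%:R ^+ k.+1); split; first by rewrite mulf_neq0.
  by rewrite (v_mul S) // v_pX ve NegzE addrC subrr.
by rewrite rmorphM conj_pX conj_e mulNr.
Qed.

(* For a unit [d] with [conj d = - d] only the Frobenius case is possible; then
   [red_conj_cases] for [x + d] forces the Frobenius case for [x] as well. *)
Lemma red_conj x : integral v x -> red (conj x) = red x ^+ p.
Proof.
have [d [d_neq0 vd conj_d]] := exists_anticonj_unit.
have id : integral v d by right; rewrite vd.
have rd_neq0 : red d != 0.
  by apply/eqP => /(red_ker S id) [/eqP|]; [rewrite (negPf d_neq0)|rewrite vd].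
have rcd_neq_rd : red (conj d) != red d.
  rewrite conj_d redN // -subr_eq0 -opprD oppr_eq0 -mulr2n -mulr_natl mulf_eq0.
  by rewrite negb_or rd_neq0 (pchar_odd_two_neq0 (pchar_Fp2 p_pr cardF) p_odd).
have rcd : red (conj d) = red d ^+ p.
  by case: (red_conj_cases id) => // rcd; rewrite rcd eqxx in rcd_neq_rd.
move=> ix; case: (red_conj_cases ix) => // rcx.
have ixd : integral v (x + d) by apply: smallD.
have [icx icd] := (small_conj ix, small_conj id).
case: (red_conj_cases ixd); rewrite rmorphD !(red_add S) ?rcx ?rcd //.
  by move/addrI => rdp; rewrite rcd rdp eqxx in rcd_neq_rd.
by rewrite (frobeniusD p_pr cardF) => /addIr.
Qed.

Fixpoint newton_sqrt (d : K) (n : nat) : K :=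
  if n is n'.+1 then (newton_sqrt d n' + d / newton_sqrt d n') / 2%:R else 1.

(* Quadratic convergence: with [u := (2 a)^-1] a unit, the step is
   [-(a^2 - d) u] and the new error is [(a^2 - d)^2 u^2]. *)
Lemma newton_step d a (N : nat) : principal a -> small v N.+1%:Z (a ^+ 2 - d) ->
  small v N.+1%:Z ((a + d / a) / 2%:R - a) /\
  small v N.+2%:Z (((a + d / a) / 2%:R) ^+ 2 - d).
Proof.
move=> pa err_a; have ia := principal_integral pa.
have ra : red a = 1 by apply/red_eq1.
have i2 := integral_nat 2.
have a_neq0 := principal_neq0 pa.
have two_neq0 : 2%:R != 0 :> K by apply: contraNneq red2_neq0 => ->; rewrite red0.
have i2a : integral v (2%:R * a) by apply: smallMr.
have r2a_neq0 : red (2%:R * a) != 0 by rewrite (red_mul S) // ra mulr1 red2_neq0.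
have [iu _] := red_inv i2a r2a_neq0; set u := (2%:R * a)^-1 in iu.
have -> : (a + d / a) / 2%:R - a = - (a ^+ 2 - d) * u.
  by rewrite /u; field; rewrite a_neq0 two_neq0.
have -> : ((a + d / a) / 2%:R) ^+ 2 - d = (a ^+ 2 - d) * (a ^+ 2 - d) * (u * u).
  by rewrite /u; field; rewrite a_neq0 two_neq0.
split; first by apply: smallMr iu; apply: smallN.
by apply: smallMr (smallMr iu iu); apply: smallW (smallM err_a err_a) _; lia.
Qed.

Lemma newton_sqrt_approx d n : principal d ->
  [/\ principal (newton_sqrt d n), small v n.+1%:Z (newton_sqrt d n ^+ 2 - d)
    & small v n.+1%:Z (newton_sqrt d n.+1 - newton_sqrt d n)].
Proof.
move=> pd; elim: n => [|n [pa err_a step_a]].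
  have pa : principal (newton_sqrt d 0) by rewrite subrr; left.
  have err_a : small v 1 (newton_sqrt d 0 ^+ 2 - d).
    by rewrite expr1n -opprB; apply: smallN.
  by have [] := newton_step pa err_a.
have [_ err_a'] := newton_step pa err_a.
have pa' : principal (newton_sqrt d n.+1).
  rewrite -(subrK (newton_sqrt d n) (newton_sqrt d n.+1)) -addrA.
  by apply: smallD pa; apply: smallW step_a _; lia.
by have [] := newton_step pa' err_a'.
Qed.

Lemma newton_sqrt_cauchy d : principal d -> forall N : int, exists M,
  forall m n, (M <= m)%N -> (M <= n)%N -> small v N (newton_sqrt d m - newton_sqrt d n).
Proof.
move=> pd N; exists `|N|%N.
suff near_n n k : (`|N| <= n)%N -> small v N (newton_sqrt d (n + k) - newton_sqrt d n).
  move=> m n Nm Nn; have [nm|/ltnW mn] := leqP n m.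
    by rewrite -(subnKC nm); apply: near_n.
  by rewrite -opprB -(subnKC mn); apply/smallN/near_n.
move=> Nn; elim: k => [|k IHk]; first by rewrite addn0 subrr; left.
rewrite addnS -(subrK (newton_sqrt d (n + k)) (newton_sqrt d (n + k).+1)) -addrA.
have [_ _ step] := newton_sqrt_approx (n + k) pd.
by apply: smallD IHk; apply: smallW step _; lia.
Qed.

Lemma principal_sqrt d : principal d -> exists2 a, a ^+ 2 = d & principal a.
Proof.
move=> pd; have [l lim_l] := v_complete S (newton_sqrt_cauchy pd).
have near_l N : exists n, (`|N| <= n)%N /\
    small v (`|N| + 1)%N%:Z (newton_sqrt d n - l).
  have [M ge_M] := lim_l (`|N| + 1)%N%:Z.
  by exists (maxn M `|N|); split; [apply: leq_maxr|apply/ge_M/leq_maxl].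
exists l.
  apply/eqP; rewrite -subr_eq0; apply/eqP/small_eq0 => N.
  have [n [Nn an_l]] := near_l N; set a := newton_sqrt d n in an_l *.
  have [pa err_a _] := newton_sqrt_approx n pd.
  have ial : integral v (a + l).
    have -> : a + l = 2%:R * a - (a - l) by ring.
    apply: smallB; first exact: smallMr (integral_nat 2) (principal_integral pa).
    by apply: smallW an_l _; lia.
  have -> : l ^+ 2 - d = (a ^+ 2 - d) - (a - l) * (a + l) by ring.
  apply: smallB; first by apply: smallW err_a _; lia.
  by apply: smallW (smallMr an_l ial) _; lia.
have [n [_ an_l]] := near_l 0; have [pa _ _] := newton_sqrt_approx n pd.
have -> : l - 1 = (newton_sqrt d n - 1) - (newton_sqrt d n - l) by ring.
by apply: smallB pa _; apply: smallW an_l _; lia.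
Qed.

Lemma norm1_integral d : d * conj d = 1 -> integral v d.
Proof.
move=> dd; have d_neq0 : d != 0.
  by apply: contra_eq_neq dd => ->; rewrite mul0r eq_sym oner_neq0.
have cd_neq0 : conj d != 0 by rewrite fmorph_eq0.
have := v_mul S d_neq0 cd_neq0; rewrite dd v1 (v_conj S d_neq0) => vd.
by right; lia.
Qed.

Lemma red_det_U1 g : inG conj g -> red (\det g) != 0 /\ red (\det g) ^+ p.+1 = 1.
Proof.
move=> gG; have dd := inG_det_norm gG; have id := norm1_integral dd.
have : red (\det g) * red (\det g) ^+ p = 1.
  by rewrite -red_conj // -(red_mul S) ?dd ?(red_1 S) //; apply: small_conj.
rewrite -exprS => rd; split=> //; apply: contra_eq_neq rd => ->.
by rewrite expr0n eq_sym oner_neq0.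
Qed.

Lemma inG_diag2_conj w : w != 0 -> inG conj (diag2 w (conj w)^-1).
Proof.
move=> w_neq0; apply: inG_diag2; first by rewrite mulfV ?fmorph_eq0.
by rewrite fmorphV (conj_invol S) mulVf.
Qed.

(* Hilbert 90: [a = b / b^p] for [b = 1 + a] if [a != -1], and [-1 = d / conj d]
   for [d] as in [exists_anticonj_unit]. *)
Lemma red_det_surj a : a != 0 -> a ^+ p.+1 = 1 ->
  exists g, inG conj g /\ red (\det g) = a.
Proof.
move=> a_neq0 a_U1; have [->|aN1] := eqVneq a (-1).
  have [d [d_neq0 vd conj_d]] := exists_anticonj_unit.
  exists (diag2 d (conj d)^-1); split; first exact: inG_diag2_conj.
  by rewrite det_diag2 conj_d invrN mulrN mulfV // redN ?(red_1 S) //; apply: integral1.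
set b := 1 + a; have b_neq0 : b != 0 by rewrite /b addrC addr_eq0.
have [w [iw rw]] := red_surj S b.
have w_neq0 : w != 0 by apply: contra_eq_neq rw => ->; rewrite red0 eq_sym.
exists (diag2 w (conj w)^-1); split; first exact: inG_diag2_conj.
have rcw_neq0 : red (conj w) != 0 by rewrite red_conj // rw expf_neq0.
have [icwV rcwV] := red_inv (small_conj iw) rcw_neq0.
have b_frob : b = a * b ^+ p.
  by rewrite /b (frobeniusD p_pr cardF) expr1n mulrDr mulr1 -exprS a_U1 addrC.
rewrite det_diag2 (red_mul S) // rcwV red_conj // rw {1}b_frob mulfK //.
exact: expf_neq0.
Qed.

Lemma inG0_principal_det g : inG0 conj v g -> principal (\det g).
Proof.
elim=> {g} [g [[_ ->]|[c [[_ pc] ->]]]||g h _ pg _ ph|g _ pg].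
- by rewrite subrr; left.
- by rewrite det_scalar expr2; apply: principalM.
- by rewrite det1 subrr; left.
- by rewrite det_mulmx; apply: principalM.
- by rewrite det_inv; apply: principalV.
Qed.

(* A square root [a] of [det g] in [1 + p Z_{p^2}] has norm [+-1], hence [1],
   so [g = a * (a^-1 g)] with [a^-1 g] in [G_S]. *)
Lemma red_det_inG0 g : inG conj g -> red (\det g) = 1 -> inG0 conj v g.
Proof.
move=> gG; have dd := inG_det_norm gG.
move/(red_eq1 (norm1_integral dd)) => pdet.
have [a a2 pa] := principal_sqrt pdet; have a_neq0 := principal_neq0 pa.
have aa : a * conj a = 1.
  apply: principal_sqr_eq1; first exact: principalM pa (principal_conj pa).
  by rewrite exprMn -rmorphXn a2.
have -> : g = a%:M *m (a^-1 *: g) by rewrite mul_scalar_mx scalerA mulfV // scale1r.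
apply: gen_mul; apply: gen_base; first by right; exists a.
left; split; first by apply: inG_scale gG; rewrite fmorphV -invfM aa invr1.
by rewrite detZ exprVn a2 mulVf // -a2 expf_neq0.
Qed.

Lemma red_det_ker g : inG conj g -> red (\det g) = 1 <-> inG0 conj v g.
Proof.
move=> gG; split; first exact: red_det_inG0.
by move/inG0_principal_det => pdet; apply/(red_eq1 (principal_integral pdet)).
Qed.

End UnramifiedQuadratic.

Theorem lemma5p7 (p : nat) (K : fieldType) (conj : {rmorphism K -> K})
    (v : K -> int) (F : finFieldType) (red : K -> F) :
  prime p -> odd p -> #|F| = (p ^ 2)%N ->
  unram_quad_setup p conj v red ->
  let eta := fun g : 'M[K]_2 => red (\det g) in
  (* eta lands in U(1)(F_{p^2}/F_p) *)
  (forall g, inG conj g -> eta g != 0 /\ eta g ^+ p.+1 = 1) /\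
  (* eta is surjective *)
  (forall a : F, a != 0 -> a ^+ p.+1 = 1 -> exists g, inG conj g /\ eta g = a) /\
  (* ker eta = G_0 *)
  (forall g, inG conj g -> (eta g = 1 <-> inG0 conj v g)).
Proof.
move=> p_pr p_odd cardF S eta.
split; first exact: red_det_U1 p_pr p_odd cardF S.
split; first exact: red_det_surj p_pr p_odd cardF S.
exact: red_det_ker p_pr p_odd cardF S.
Qed.
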